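(* Let $\Omega\subset\mathbb{R}^n$ be a bounded open set and let $u$ be a viscosity subsolution of $\frac{\Delta_\infty u}{|Du|^2}=1$ in $\Omega$. Then there does not exist a nonempty open set $V\subset\Omega$ such that $u$ is constant on $V$.
   Context: $\Delta_\infty u=\sum_{i,j=1}^n u_{x_i}u_{x_j}u_{x_ix_j}$. $u$ is a viscosity subsolution of $\frac{\Delta_\infty u}{|Du|^2}=1$ in $\Omega$ if $u$ is upper semicontinuous and whenever $\phi\in C^2(\Omega)$ and $u-\phi$ has a local maximum at $x\in\Omega$, then $\frac{\Delta_\infty\phi(x)}{|D\phi(x)|^2}\ge 1$ if $D\phi(x)\neq0$, and $\max_{|p|=1}p\cdot D^2\phi(x)\,p\ge1$ if $D\phi(x)=0$. *)

From HB Require Import structures.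
From mathcomp Require Import all_boot all_order all_algebra.
From mathcomp Require Import all_classical all_reals all_analysis.
Set Implicit Arguments. Unset Strict Implicit. Unset Printing Implicit Defensive.
Import Order.TTheory GRing.Theory Num.Theory.
Import numFieldNormedType.Exports.
Local Open Scope classical_set_scope.
Local Open Scope ring_scope.

Section Defs.
Variables (R : realType) (n : nat).
Notation V := 'rV[R]_n.

Definition evec (i : 'I_n) : V := delta_mx 0 i.

Definition pd (i : 'I_n) (f : V -> R) : V -> R := fun x => derive f x (evec i).

Definition C2_on (O : set V) (f : V -> R) : Prop :=
  forall x, O x ->
    {for x, continuous f} /\
    (forall i, derivable f x (evec i) /\ {for x, continuous (pd i f)}) /\
    (forall i j, derivable (pd i f) x (evec j) /\
                 {for x, continuous (pd j (pd i f))}).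

Definition sqnorm (p : V) : R := \sum_(i < n) p 0 i ^+ 2.

Definition grad (f : V -> R) (x : V) : V := \row_i pd i f x.
Definition hess (f : V -> R) (x : V) (i j : 'I_n) : R := pd j (pd i f) x.

Definition inf_lap (f : V -> R) (x : V) : R :=
  \sum_(i < n) \sum_(j < n) pd i f x * pd j f x * hess f x i j.

Definition hess_form (f : V -> R) (x p : V) : R :=
  \sum_(i < n) \sum_(j < n) p 0 i * hess f x i j * p 0 j.

Definition usc_on (O : set V) (u : V -> R) : Prop :=
  forall x, O x -> forall e : R, 0 < e -> \forall y \near x, u y < u x + e.

Definition local_max_on (O : set V) (g : V -> R) (x : V) : Prop :=
  \forall y \near x, O y -> g y <= g x.

Definition visc_subsol (O : set V) (u : V -> R) : Prop :=
  usc_on O u /\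
  forall (phi : V -> R) (x : V), C2_on O phi -> O x ->
    local_max_on O (u \- phi) x ->
    (grad phi x != 0 -> inf_lap phi x / sqnorm (grad phi x) >= 1) /\
    (grad phi x = 0 ->
       exists2 p : V, sqnorm p = 1 & hess_form phi x p >= 1).
End Defs.

From HB Require Import structures.
From mathcomp Require Import all_boot all_order all_algebra.
From mathcomp Require Import all_classical all_reals all_analysis.
Import Order.TTheory GRing.Theory Num.Theory.
Import numFieldNormedType.Exports.
Local Open Scope classical_set_scope.
Local Open Scope ring_scope.

(* If u = c on an open V, then the constant test function c touches u from
   above at any point of V. Its gradient vanishes, so the subsolution
   property demands a unit direction p with p . D^2 c p >= 1; but the
   Hessian of a constant is zero. *)

Lemma pd_cst (R : realType) (n : nat) (c : R) (i : 'I_n) :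
  pd i (fun _ : 'rV[R]_n => c) = fun _ => 0.
Proof. by apply: funext => x; rewrite /pd derive_cst. Qed.

Section ConstantTestFunction.
Context {R : realType} {n : nat} (c : R).
Notation cst := (fun _ : 'rV[R]_n => c).

Lemma C2_on_cst (O : set 'rV[R]_n) : C2_on O cst.
Proof.
move=> x _; split; first exact: cst_continuous.
by split=> [i|i j]; rewrite ?pd_cst; split;
  (exact: derivable_cst || exact: cst_continuous).
Qed.

Lemma grad_cst (x : 'rV[R]_n) : grad cst x = 0.
Proof. by apply/rowP => i; rewrite !mxE pd_cst. Qed.

Lemma hess_form_cst (x p : 'rV[R]_n) : hess_form cst x p = 0.
Proof.
rewrite /hess_form /hess big1 // => i _; rewrite big1 // => j _.
by rewrite !pd_cst mulr0 mul0r.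
Qed.

End ConstantTestFunction.

Lemma local_max_on_sub_cst {R : realType} {n : nat} (O : set 'rV[R]_n)
    {V : set 'rV[R]_n} {u : 'rV[R]_n -> R} {c : R} {x : 'rV[R]_n} :
  open V -> V x -> (forall y, V y -> u y = c) ->
  local_max_on O (u \- (fun => c)) x.
Proof.
move=> oV Vx uc; have nV : nbhs x V by exact: open_nbhs_nbhs.
by apply: filterS nV => y Vy _ /=; rewrite !uc.
Qed.

Theorem lemma2p3 (R : realType) (n : nat) (Omega : set 'rV[R]_n)
    (u : 'rV[R]_n -> R) :
  open Omega -> bounded_set Omega -> visc_subsol Omega u ->
  ~ (exists V : set 'rV[R]_n,
       [/\ open V, V !=set0, V `<=` Omega & exists c : R, forall x, V x -> u x = c]).
Proof.
move=> _ _ [_ subsol] [V [oV [x Vx] VO [c uc]]].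
have touch := local_max_on_sub_cst Omega oV Vx uc.
have [_ at_critical] := subsol _ x (C2_on_cst c Omega) (VO _ Vx) touch.
have [p _] := at_critical (grad_cst c x).
by rewrite hess_form_cst ler10.
Qed.
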